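(* Let $M=p_i^{n_i}p_j^{n_j}p_k^{n_k}$ with distinct primes and $n_i,n_j,n_k\in\mathbb{N}$, let $A\oplus B=\mathbb{Z}_M$ with $\Phi_M(X)\mid A(X)$, assume $A$ is fibered on $D$-grids where $D=M/(p_ip_jp_k)$, and let $\Lambda=\Lambda(z_0,D)$ for some $z_0\in\mathbb{Z}_M$. (i) If there exists $a\in\Sigma_A(\Lambda)\cap\mathcal{I}\cap\mathcal{J}\cap\mathcal{K}$ with $\kappa(a)=i$, then $\kappa(a')=i$ for all $a'\in\Sigma_A(\Lambda)$; in particular $\Sigma_A(\Lambda)\subset\mathcal{I}$. (ii) If $\Sigma_A(\Lambda)\cap\mathcal{I}\cap\mathcal{J}\cap\mathcal{K}=\emptyset$, then there is $S\subset\{i,j,k\}$ with $|S|\le2$ such that $\kappa(a)\in S$ for all $a\in\Sigma_A(\Lambda)$; in particular $\Sigma_A(\Lambda)$ is contained in the union of two of the sets $\mathcal{I},\mathcal{J},\mathcal{K}$. (iii) Assume $\Sigma_A(\Lambda)\cap\mathcal{I}\cap\mathcal{J}\cap\mathcal{K}=\emptyset$ and that (after permuting the indices $i,j,k$ if necessary) $\kappa(a)\in\{i,j\}$ for all $a\in\Sigma_A(\Lambda)$. Let $z_\nu=z_0+\nu M/p_k$ for $\nu=0,1,\dots,p_k-1$. Then for each $\nu$ there is $\lambda(\nu)\in\{i,j\}$ such that $\kappa(a)=\lambda(\nu)$ for all $a\in\Sigma_A(z_\nu*F_i*F_j)$.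
   Context: $A\oplus B=\mathbb{Z}_M$ means every element of $\mathbb{Z}_M$ is uniquely $a+b$, $a\in A$, $b\in B$; $A(X)=\sum_{a\in A}X^a$ ($A$ in $\{0,\dots,M-1\}$), $\Phi_M$ the $M$-th cyclotomic polynomial. For $d\mid M$, $\Lambda(x,d)=\{x'\in\mathbb{Z}_M:d\mid x-x'\}$. For $\nu\in\{i,j,k\}$, $F_\nu=\{0,M/p_\nu,\dots,(p_\nu-1)M/p_\nu\}$; $x*Y=\{x+y:y\in Y\}$ and $X*Y=\{x+y:x\in X,y\in Y\}$. A set $Y$ is fibered in the $p_\nu$ direction if it is a union of sets $y*F_\nu$, $y\in Y$. ''$A$ is fibered on $D$-grids'' means for every $a\in A$, $A\cap\Lambda(a,D)$ is fibered in some direction $p_\nu$. The function $\kappa:A\to\{i,j,k\}$: for each $D$-grid $\Lambda(x,D)$ meeting $A$, fix one direction $\nu(x)$ in which $A\cap\Lambda(x,D)$ is fibered (chosen arbitrarily if several) and set $\kappa(a)=\nu(x)$ for $a\in A\cap\Lambda(x,D)$. $\mathcal{I}=\{a\in A:a*F_i\subset A\}$, $\mathcal{J},\mathcal{K}$ analogously with $F_j,F_k$. For $Z\subset\mathbb{Z}_M$, $\Sigma_A(Z)=\{a\in A:a+b\in Z\text{ for some }b\in B\}$. *)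

(* Z_M is represented by 'I_M, with arithmetic mod M on
   natural representatives. Directions i,j,k are indexed by 'I_3. *)
From mathcomp Require Import all_boot all_order all_algebra all_field.
Unset Printing Implicit Defensive.
Import GRing.Theory.

Definition tiling (M : nat) (A B : {set 'I_M}) : bool :=
  [forall z : 'I_M,
    #|[set ab : 'I_M * 'I_M | [&& ab.1 \in A, ab.2 \in B &
                               (ab.1 + ab.2) %% M == z]]| == 1].

Definition maskpoly (M : nat) (A : {set 'I_M}) : {poly int} :=
  (\sum_(a in A) 'X^a)%R.

Definition grid (M d : nat) (x : 'I_M) : {set 'I_M} :=
  [set x' : 'I_M | x %% d == x' %% d].

Definition fiber (M p : nat) (x : 'I_M) : {set 'I_M} :=
  [set y : 'I_M | [exists t : 'I_p, val y == (x + t * (M %/ p)) %% M]].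

Definition Fsum (M p : nat) (Y : {set 'I_M}) : {set 'I_M} :=
  [set y : 'I_M | [exists x in Y, y \in fiber M p x]].

Definition fibered (M p : nat) (Y : {set 'I_M}) : bool :=
  [forall y in Y, fiber M p y \subset Y].

Definition fibered_on_grids (M D : nat) (q : 'I_3 -> nat) (A : {set 'I_M}) : Prop :=
  forall a, a \in A -> exists nu : 'I_3, fibered M (q nu) (A :&: grid M D a).

Definition kappa_spec (M D : nat) (q : 'I_3 -> nat) (A : {set 'I_M})
  (kappa : 'I_M -> 'I_3) : Prop :=
  (forall a a', a \in A -> a' \in A -> a' \in grid M D a -> kappa a = kappa a') /\
  (forall a, a \in A -> fibered M (q (kappa a)) (A :&: grid M D a)).

Definition fullfib (M p : nat) (A : {set 'I_M}) : {set 'I_M} :=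
  [set a in A | fiber M p a \subset A].

Definition SigmaA (M : nat) (A B Z : {set 'I_M}) : {set 'I_M} :=
  [set a in A | [exists b in B, [exists z in Z, val z == (a + b) %% M]]].

Definition pt (M x : nat) : {set 'I_M} := [set y : 'I_M | val y == x %% M].

Definition d0 : 'I_3 := @Ordinal 3 0 isT.
Definition d1 : 'I_3 := @Ordinal 3 1 isT.
Definition d2 : 'I_3 := @Ordinal 3 2 isT.

(* Colour each x in Z_M by kappa(a), where x = a + b is its unique decomposition
   ([tile_dir]).  Since A is fibered on D-grids in the direction kappa, a point of
   colour nu lies on a whole line x + Z M/p_nu of colour nu, so lines of different
   colours never meet.  A D-grid is the cube spanned by the directions M/p_i, M/p_j,
   M/p_k.  (i) If a is in I, J and K, the two coordinate planes through its point
   spanned by the i-direction and the j- (resp. k-) direction have colour i, and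
   every j- or k-line of the cube hits one of them.  (ii) Given points
   (s0,t0,u0), (s1,t1,u1), (s2,t2,u2) of colours i, j, k, the line of its own colour
   through (s2,t0,u1) would meet one of theirs.  (iii) In a plane spanned by the i- and
   j-directions every i-line meets every j-line. *)

From mathcomp Require Import all_boot all_order all_algebra all_field.
From mathcomp Require Import ring.
Import GRing.Theory.

Local Open Scope ring_scope.

Lemma ord3P (x : 'I_3) : [\/ x = d0, x = d1 | x = d2].
Proof.
by case: x => -[|[|[|//]]] ?; [constructor 1|constructor 2|constructor 3]; apply: val_inj.
Qed.

Section LineColoring.

Variables (c : int -> 'I_3) (m : 'I_3 -> int).
Hypothesis c_line : forall x t, c (x + t * m (c x)) = c x.

Lemma line_colors_eq x y nu mu s t :
  c x = nu -> c y = mu -> x + s * m nu = y + t * m mu -> nu = mu.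
Proof. by move=> <- <- E; rewrite -(c_line x s) E c_line. Qed.
Arguments line_colors_eq {x y nu mu}.

Lemma plane_colors_eq i j x s1 t1 s2 t2 :
  c (x + s1 * m i + t1 * m j) = i -> c (x + s2 * m i + t2 * m j) = j -> i = j.
Proof. by move=> ci cj; apply: (line_colors_eq (s2 - s1) (t1 - t2) ci cj); ring. Qed.

Lemma cube_monochrome x s t u :
  (forall r, c (x + r * m d1) = d0) -> (forall r, c (x + r * m d2) = d0) ->
  c (x + s * m d0 + t * m d1 + u * m d2) = d0.
Proof.
move=> c1 c2; set y := _ + _ + _; case: (ord3P (c y)) => // cy.
- have /(congr1 val) // : d0 = d1.
  by apply: (line_colors_eq s (- t) (c2 u) cy); rewrite /y; ring.
- have /(congr1 val) // : d0 = d2.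
  by apply: (line_colors_eq s (- u) (c1 t) cy); rewrite /y; ring.
Qed.

Lemma no_rainbow x s0 t0 u0 s1 t1 u1 s2 t2 u2 :
  c (x + s0 * m d0 + t0 * m d1 + u0 * m d2) = d0 ->
  c (x + s1 * m d0 + t1 * m d1 + u1 * m d2) = d1 ->
  c (x + s2 * m d0 + t2 * m d1 + u2 * m d2) = d2 -> False.
Proof.
move=> c0 c1 c2; set y := x + s2 * m d0 + t0 * m d1 + u1 * m d2.
case: (ord3P (c y)) => cy.
- have /(congr1 val) // : d0 = d1.
  by apply: (line_colors_eq (s1 - s2) (t0 - t1) cy c1); rewrite /y; ring.
- have /(congr1 val) // : d1 = d2.
  by apply: (line_colors_eq (t2 - t0) (u1 - u2) cy c2); rewrite /y; ring.
- have /(congr1 val) // : d2 = d0.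
  by apply: (line_colors_eq (u0 - u1) (s2 - s0) cy c0); rewrite /y; ring.
Qed.

End LineColoring.

Arguments line_colors_eq {c m} c_line {x y nu mu}.
Arguments plane_colors_eq {c m} c_line {i j x s1 t1 s2 t2}.
Arguments cube_monochrome {c m} c_line {x} s t u.
Arguments no_rainbow {c m} c_line {x s0 t0 u0 s1 t1 u1 s2 t2 u2}.

Lemma dvdz_natmod (M x y : nat) : (M%:Z %| x%:Z - y%:Z)%Z = (x == y %[mod M])%N.
Proof. by rewrite -eqz_mod_dvd !modz_nat eqz_nat. Qed.

Lemma fiber_shift {M p : nat} (x : 'I_M) (t : int) : (0 < p)%N -> (p %| M)%N ->
  exists2 y, y \in fiber M p x & (M%:Z %| y%:Z - (x%:Z + t * (M %/ p)%:Z))%Z.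
Proof.
move=> p_gt0 pM; have M_gt0 : (0 < M)%N := leq_ltn_trans (leq0n x) (ltn_ord x).
have t_ge0 : 0 <= (t %% p)%Z by rewrite modz_ge0 // eqz_nat -lt0n.
have t_lt : (absz (t %% p)%Z < p)%N by rewrite -ltz_nat gez0_abs // ltz_pmod.
set r := absz (t %% p)%Z; set y := (x + r * (M %/ p))%N.
exists (Ordinal (ltn_pmod y M_gt0)).
  by rewrite inE; apply/existsP; exists (Ordinal t_lt).
have -> : (y %% M)%N%:Z - (x%:Z + t * (M %/ p)%:Z)
          = ((y %% M)%N%:Z - y%:Z) - (t %/ p)%Z * (M %/ p * p)%N%:Z.
  by rewrite /y /r PoszD !PoszM gez0_abs // [in t * _](divz_eq t p); ring.
by rewrite rpredB ?dvdz_natmod ?modn_mod // divnK // dvdz_mull.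
Qed.

Lemma fiber_grid {M p D : nat} {x y : 'I_M} : (p %| M)%N -> (D %| M %/ p)%N ->
  y \in fiber M p x -> y \in grid M D x.
Proof.
move=> pM DMp; have DM : (D %| M)%N := dvdn_trans DMp (dvdn_div pM).
rewrite !inE => /existsP [t /eqP ->]; rewrite modn_dvdm //.
by case/dvdnP: DMp => k ->; rewrite mulnA addnC modnMDl.
Qed.

Lemma grid_dvdz M D (z0 z : 'I_M) : (z \in grid M D z0) = (D%:Z %| z%:Z - z0%:Z)%Z.
Proof. by rewrite inE dvdz_natmod eq_sym. Qed.

Lemma tiling_uniq {M} {A B : {set 'I_M}} {a b a' b' : 'I_M} : tiling M A B ->
  a \in A -> b \in B -> a' \in A -> b' \in B ->
  (a + b = a' + b' %[mod M])%N -> (a, b) = (a', b').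
Proof.
move=> /forallP htile aA bB a'A b'B ab_eq.
have M_gt0 : (0 < M)%N := leq_ltn_trans (leq0n a) (ltn_ord a).
have /cards1P [u Hu] := htile (Ordinal (ltn_pmod (a + b) M_gt0)).
have : (a, b) \in [set u] by rewrite -Hu inE /= aA bB eqxx.
have : (a', b') \in [set u] by rewrite -Hu inE /= a'A b'B ab_eq eqxx.
by rewrite !inE => /eqP -> /eqP ->.
Qed.

Lemma kappa_fullfib {M D q A kappa} {a : 'I_M} : kappa_spec M D q A kappa ->
  a \in A -> a \in fullfib M (q (kappa a)) A.
Proof.
case=> _ fib aA; rewrite inE aA /=.
have aAg : a \in A :&: grid M D a by rewrite !inE aA eqxx.
by move/forall_inP: (fib a aA) => /(_ a aAg) /subset_trans; apply; apply: subsetIl.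
Qed.

Lemma SigmaA_subset {M A B} {Z1 Z2 : {set 'I_M}} :
  Z1 \subset Z2 -> SigmaA M A B Z1 \subset SigmaA M A B Z2.
Proof.
move=> /subsetP sZ; apply/subsetP => a; rewrite !inE => /andP [-> /exists_inP [b bB]].
move=> /exists_inP [z zZ zab]; apply/exists_inP; exists b => //.
by apply/exists_inP; exists z; rewrite ?sZ.
Qed.

Lemma pt_dvdz M x (y : 'I_M) : y \in pt M x -> (M%:Z %| y%:Z - x%:Z)%Z.
Proof. by rewrite inE => /eqP ->; rewrite dvdz_natmod modn_mod eqxx. Qed.

Lemma Fsum_dvdz M p (Y : {set 'I_M}) (w : 'I_M) : w \in Fsum M p Y ->
  exists2 y : 'I_M, y \in Y & exists t : int, (M%:Z %| w%:Z - (y%:Z + t * (M %/ p)%:Z))%Z.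
Proof.
rewrite inE => /exists_inP [y yY]; rewrite inE => /existsP [t /eqP ->].
by exists y => //; exists t; rewrite -PoszM -PoszD dvdz_natmod modn_mod eqxx.
Qed.

Lemma Fsum_grid {M p D} {x : 'I_M} {Y : {set 'I_M}} : (p %| M)%N -> (D %| M %/ p)%N ->
  Y \subset grid M D x -> Fsum M p Y \subset grid M D x.
Proof.
move=> pM DMp /subsetP YG; apply/subsetP => w; rewrite inE => /exists_inP [y yY wy].
by move: (YG y yY) (fiber_grid pM DMp wy); rewrite !inE => /eqP -> /eqP ->.
Qed.

Lemma pt_fiber {M p} (x : 'I_M) {v} : (v < p)%N ->
  pt M (x + v * (M %/ p))%N \subset fiber M p x.
Proof.
by move=> vp; apply/subsetP => y; rewrite !inE => yx; apply/existsP; exists (Ordinal vp).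
Qed.

Section TileDirection.

Variables (M : nat) (A B : {set 'I_M}) (kappa : 'I_M -> 'I_3).

Definition covers (P : int) (ab : 'I_M * 'I_M) : bool :=
  [&& ab.1 \in A, ab.2 \in B & (M%:Z %| P - (ab.1 + ab.2)%N%:Z)%Z].

(* The default [d0] is never used when [A (+) B = Z_M] and [M > 0]. *)
Definition tile_dir (P : int) : 'I_3 :=
  if [pick ab | covers P ab] is Some ab then kappa ab.1 else d0.

Lemma tile_dir_mod (P P' : int) : (M%:Z %| P - P')%Z -> tile_dir P = tile_dir P'.
Proof.
rewrite -eqz_mod_dvd => /eqP PP'.
by rewrite /tile_dir (@eq_pick _ _ (covers P')) // => ab; rewrite /covers -!eqz_mod_dvd PP'.
Qed.

Hypothesis htile : tiling M A B.

Lemma tile_cover (P : int) : (0 < M)%N -> exists ab, covers P ab.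
Proof.
move=> M_gt0; have P_ge0 : 0 <= (P %% M)%Z by rewrite modz_ge0 // eqz_nat -lt0n.
have P_lt : (absz (P %% M)%Z < M)%N by rewrite -ltz_nat gez0_abs // ltz_pmod.
have /cards1P [[a b] ab_set] := forallP htile (Ordinal P_lt).
have : (a, b) \in [set (a, b)] by rewrite set11.
rewrite -ab_set inE /= => /and3P [aA bB /eqP ab_eq].
by exists (a, b); rewrite /covers aA bB -eqz_mod_dvd modz_nat ab_eq gez0_abs ?eqxx.
Qed.

Lemma tile_dirE (P : int) a b : covers P (a, b) -> tile_dir P = kappa a.
Proof.
move=> cov; rewrite /tile_dir; case: pickP => [[a' b'] cov' | /(_ (a, b))]; last by rewrite cov.
case/and3P: cov => /= aA bB Pab; case/and3P: cov' => /= a'A b'B Pab'.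
suff [-> _] : (a', b') = (a, b) by [].
apply: (tiling_uniq htile a'A b'B aA bB); apply/eqP; rewrite -dvdz_natmod.
have -> : (a' + b')%N%:Z - (a + b)%N%:Z = (P - (a + b)%N%:Z) - (P - (a' + b')%N%:Z) by ring.
exact: rpredB.
Qed.

Lemma tile_dir_fiber D (q : 'I_3 -> nat) p (P t : int) a b : kappa_spec M D q A kappa ->
  covers P (a, b) -> (0 < p)%N -> (p %| M)%N -> (D %| M %/ p)%N -> fiber M p a \subset A ->
  tile_dir (P + t * (M %/ p)%:Z) = kappa a.
Proof.
move=> [kappa_grid _] cov p_gt0 pM DMp /subsetP fibA.
case/and3P: cov => /= aA bB Pab; have [y ya ydiv] := fiber_shift a t p_gt0 pM.
rewrite (kappa_grid a y aA (fibA y ya) (fiber_grid pM DMp ya)).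
apply: (tile_dirE _ y b); rewrite /covers fibA //= bB.
have -> : P + t * (M %/ p)%:Z - (y + b)%N%:Z
          = (P - (a + b)%N%:Z) - (y%:Z - (a%:Z + t * (M %/ p)%:Z)) by ring.
exact: rpredB.
Qed.

Lemma SigmaA_cover Z a : a \in SigmaA M A B Z ->
  exists2 z : 'I_M, z \in Z & exists b, covers z (a, b).
Proof.
rewrite inE => /andP [aA /existsP [b /andP [bB /existsP [z /andP [zZ /eqP zab]]]]].
by exists z => //; exists b; rewrite /covers /= aA bB dvdz_natmod zab modn_mod eqxx.
Qed.

End TileDirection.

Arguments tile_cover {M A B} htile P.
Arguments tile_dirE {M A B kappa} htile {P a b}.
Arguments tile_dir_fiber {M A B kappa} htile {D q p P} t {a b}.
Arguments SigmaA_cover {M A B Z a}.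
Arguments tile_dir_mod {M A B kappa P P'}.

Lemma dvdz_comb3 {D p0 p1 p2 : nat} {w : int} :
  coprime p0 p1 -> coprime p0 p2 -> coprime p1 p2 -> (D%:Z %| w)%Z ->
  exists s t u : int,
    w = s * (D * (p1 * p2))%N%:Z + t * (D * (p0 * p2))%N%:Z + u * (D * (p0 * p1))%N%:Z.
Proof.
move=> c01 c02 c12 /dvdzP [k ->].
have /coprimezP [[u v] /= uv1] : coprimez p0%:Z (p1 * p2)%N%:Z by rewrite coprimezE coprimeMr c01.
have /coprimezP [[x y] /= xy1] : coprimez p1%:Z p2%:Z by rewrite coprimezE.
exists (k * v), (k * u * y), (k * u * x).
have -> : k * D%:Z = k * D%:Z * (u * p0%:Z * (x * p1%:Z + y * p2%:Z) + v * (p1 * p2)%N%:Z).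
  by rewrite xy1 mulr1 uv1 mulr1.
by rewrite !PoszM; ring.
Qed.

Section DirectionsInAGrid.

Context {q : 'I_3 -> nat} {D M : nat} {A B : {set 'I_M}} {kappa : 'I_M -> 'I_3}.
Hypotheses (q_gt0 : forall nu, (0 < q nu)%N)
  (q_coprime : forall nu mu : 'I_3, nu != mu -> coprime (q nu) (q mu))
  (M_gt0 : (0 < M)%N) (M_def : M = (D * (q d0 * q d1 * q d2))%N)
  (htile : tiling M A B) (hkappa : kappa_spec M D q A kappa).

Let m (nu : 'I_3) : int := (M %/ q nu)%N%:Z.
Local Notation c := (tile_dir M A B kappa).
Local Notation Sig z0 := (SigmaA M A B (grid M D z0)).

Lemma quo_d0 : (M %/ q d0 = D * (q d1 * q d2))%N.
Proof. by rewrite M_def (_ : (D * _ = D * (q d1 * q d2) * q d0)%N) ?mulnK //; ring. Qed.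

Lemma quo_d1 : (M %/ q d1 = D * (q d0 * q d2))%N.
Proof. by rewrite M_def (_ : (D * _ = D * (q d0 * q d2) * q d1)%N) ?mulnK //; ring. Qed.

Lemma quo_d2 : (M %/ q d2 = D * (q d0 * q d1))%N.
Proof. by rewrite M_def (_ : (D * _ = D * (q d0 * q d1) * q d2)%N) ?mulnK //; ring. Qed.

Lemma q_dvdM nu : (q nu %| M)%N.
Proof.
rewrite M_def; apply: dvdn_mull; case: (ord3P nu) => ->.
- by rewrite -mulnA dvdn_mulr.
- by rewrite mulnAC dvdn_mull.
- exact: dvdn_mull.
Qed.

Lemma D_dvd_quo nu : (D %| M %/ q nu)%N.
Proof. by case: (ord3P nu) => ->; rewrite ?quo_d0 ?quo_d1 ?quo_d2 dvdn_mulr. Qed.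

Lemma grid_decomp {z0 z : 'I_M} : z \in grid M D z0 ->
  exists s t u : int, z%:Z = z0%:Z + s * m d0 + t * m d1 + u * m d2.
Proof.
rewrite grid_dvdz.
move=> /(dvdz_comb3 (q_coprime d0 d1 isT) (q_coprime d0 d2 isT) (q_coprime d1 d2 isT)).
case=> s [t [u E]]; exists s, t, u.
by rewrite /m quo_d0 quo_d1 quo_d2 -[z%:Z](subrK z0%:Z) E; ring.
Qed.

Lemma tile_dir_line (x t : int) : c (x + t * m (c x)) = c x.
Proof.
have [[a b] cov] := tile_cover htile x M_gt0; rewrite (tile_dirE htile cov).
have aA : a \in A by case/and3P: cov.
have /setIdP [_ fibA] := kappa_fullfib hkappa aA.
exact: (tile_dir_fiber htile t hkappa cov (q_gt0 _) (q_dvdM _) (D_dvd_quo _) fibA).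
Qed.

Lemma Sig_kappa_coords z0 a : a \in Sig z0 ->
  exists s t u : int, c (z0%:Z + s * m d0 + t * m d1 + u * m d2) = kappa a.
Proof.
case/SigmaA_cover => z zL [b cov]; have [s [t [u E]]] := grid_decomp zL.
by exists s, t, u; rewrite -E (tile_dirE htile cov).
Qed.

Lemma Sig_kappa_d0 z0 a : a \in Sig z0 ->
  a \in fullfib M (q d1) A -> a \in fullfib M (q d2) A -> kappa a = d0 ->
  forall a', a' \in Sig z0 -> kappa a' = d0.
Proof.
case/SigmaA_cover => z zL [b cov] /setIdP [_ F1] /setIdP [_ F2] ka a'.
case/Sig_kappa_coords => s' [t' [u' <-]].
have line nu : fiber M (q nu) a \subset A -> forall t : int, c (z%:Z + t * m nu) = d0.
  move=> F t; rewrite -ka.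
  exact: (tile_dir_fiber htile t hkappa cov (q_gt0 _) (q_dvdM _) (D_dvd_quo _) F).
have [s [t [u Ez]]] := grid_decomp zL.
have -> : z0%:Z + s' * m d0 + t' * m d1 + u' * m d2
          = z%:Z + (s' - s) * m d0 + (t' - t) * m d1 + (u' - u) * m d2 by rewrite Ez; ring.
exact: (cube_monochrome tile_dir_line _ _ _ (line _ F1) (line _ F2)).
Qed.

Lemma Sig_kappa_missing z0 : exists nu : 'I_3, forall a, a \in Sig z0 -> kappa a != nu.
Proof.
case: (pickP (fun nu => [forall a in Sig z0, kappa a != nu])) => [nu /forall_inP | none].
  by exists nu.
have hit nu : exists s t u : int, c (z0%:Z + s * m d0 + t * m d1 + u * m d2) = nu.
  by have /forall_inPn [a aS /negPn /eqP <-] := negbT (none nu); apply: Sig_kappa_coords.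
have [s0 [t0 [u0 c0]]] := hit d0; have [s1 [t1 [u1 c1]]] := hit d1.
by have [s2 [t2 [u2 c2]]] := hit d2; case: (no_rainbow tile_dir_line c0 c1 c2).
Qed.

Lemma plane_Sig_kappa_const z0 (mi mj mk : 'I_3) : mi != mj ->
  (forall a, a \in Sig z0 -> (kappa a == mi) || (kappa a == mj)) ->
  forall v, (v < q mk)%N -> exists lam : 'I_3, ((lam == mi) || (lam == mj)) /\
    forall a, a \in SigmaA M A B (Fsum M (q mj) (Fsum M (q mi) (pt M (z0 + v * (M %/ q mk))%N))) ->
      kappa a = lam.
Proof.
move=> nij dirs v vlt; set x := (z0 + v * (M %/ q mk))%N; set W := Fsum _ _ _.
have W_grid : W \subset grid M D z0.
  apply: Fsum_grid (q_dvdM _) (D_dvd_quo _) _; apply: Fsum_grid (q_dvdM _) (D_dvd_quo _) _.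
  apply: subset_trans (pt_fiber z0 vlt) _; apply/subsetP => y.
  exact: fiber_grid (q_dvdM _) (D_dvd_quo _).
have W_dirs a : a \in SigmaA M A B W -> (kappa a == mi) || (kappa a == mj).
  have /subsetP SigW : SigmaA M A B W \subset Sig z0 := SigmaA_subset W_grid.
  by move=> /SigW; apply: dirs.
have W_coords a : a \in SigmaA M A B W ->
    exists s t : int, c (x%:Z + s * m mi + t * m mj) = kappa a.
  case/SigmaA_cover => w /Fsum_dvdz [y /Fsum_dvdz [y' /pt_dvdz y'x [s ys]] [t wt]] [b cov].
  exists s, t; rewrite -(tile_dirE htile cov); apply: tile_dir_mod.
  have -> : x%:Z + s * m mi + t * m mj - w%:Z
            = - ((w%:Z - (y%:Z + t * m mj)) + (y%:Z - (y'%:Z + s * m mi)) + (y'%:Z - x%:Z)) by ring.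
  by rewrite rpredN; apply: rpredD; [apply: rpredD|].
case: (pickP [pred a in SigmaA M A B W | kappa a == mj]) => [a /andP [aW /eqP kaj] | no_j].
  exists mj; rewrite eqxx orbT; split=> // a' a'W.
  case/orP: (W_dirs a' a'W) => /eqP // ka'.
  have [s [t E]] := W_coords a aW; have [s' [t' E']] := W_coords a' a'W.
  rewrite ka' in E'; rewrite kaj in E.
  by move: nij; rewrite (plane_colors_eq tile_dir_line E' E) eqxx.
exists mi; rewrite eqxx; split=> // a' a'W.
case/orP: (W_dirs a' a'W) => /eqP // ka'.
by move: (no_j a'); rewrite /= a'W ka' eqxx.
Qed.

End DirectionsInAGrid.

Local Close Scope ring_scope.

Theorem lemma7p4
  (q n : 'I_3 -> nat) (M : nat)
  (hprime : forall t, prime (q t)) (hinj : injective q)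
  (hn : forall t, 0 < n t)
  (hM : M = q d0 ^ n d0 * q d1 ^ n d1 * q d2 ^ n d2)
  (A B : {set 'I_M})
  (htile : tiling M A B)
  (hPhi : dvdp 'Phi_M (maskpoly M A))
  (hfib : fibered_on_grids M (M %/ (q d0 * q d1 * q d2)) q A)
  (kappa : 'I_M -> 'I_3)
  (hkappa : kappa_spec M (M %/ (q d0 * q d1 * q d2)) q A kappa)
  (z0 : 'I_M) :
  let D := M %/ (q d0 * q d1 * q d2) in
  let Lam := grid M D z0 in
  let Sig := SigmaA M A B Lam in
  let I3 := fullfib M (q d0) A :&: fullfib M (q d1) A :&: fullfib M (q d2) A in
  (* (i) *)
  ((exists2 a, a \in Sig :&: I3 & kappa a = d0) ->
     (forall a', a' \in Sig -> kappa a' = d0) /\ Sig \subset fullfib M (q d0) A)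
  /\
  (* (ii) *)
  (Sig :&: I3 = set0 ->
     (exists S : {set 'I_3}, #|S| <= 2 /\ forall a, a \in Sig -> kappa a \in S) /\
     (exists mu1 mu2 : 'I_3,
        Sig \subset fullfib M (q mu1) A :|: fullfib M (q mu2) A))
  /\
  (* (iii) *)
  (forall mi mj mk : 'I_3, mi != mj -> mj != mk -> mi != mk ->
     Sig :&: I3 = set0 ->
     (forall a, a \in Sig -> (kappa a == mi) || (kappa a == mj)) ->
     forall v, v < q mk ->
       exists lam : 'I_3, (lam == mi) || (lam == mj) /\
         forall a, a \in SigmaA M A B
                     (Fsum M (q mj) (Fsum M (q mi) (pt M (z0 + v * (M %/ q mk))))) ->
                   kappa a = lam).
Proof.
move=> D Lam Sig I3.
have q_gt0 nu : 0 < q nu := prime_gt0 (hprime nu).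
have q_coprime (nu mu : 'I_3) : nu != mu -> coprime (q nu) (q mu).
  by move=> numu; rewrite prime_coprime // dvdn_prime2 // (inj_eq hinj).
have M_gt0 : 0 < M by rewrite hM !muln_gt0 !expn_gt0 !q_gt0.
have M_def : M = D * (q d0 * q d1 * q d2).
  rewrite /D divnK // hM; apply: dvdn_mul; [apply: dvdn_mul|]; exact: dvdn_exp (hn _) (dvdnn _).
have Sig_fullfib a : a \in Sig -> a \in fullfib M (q (kappa a)) A.
  by case/setIdP => aA _; apply: kappa_fullfib hkappa aA.
split; [|split].
- case=> a /setIP [aS /setIP [/setIP [_ F1] F2]] ka.
  have Sig_d0 := Sig_kappa_d0 q_gt0 q_coprime M_gt0 M_def htile hkappa z0 a aS F1 F2 ka.
  split=> //; apply/subsetP => a' a'S; rewrite -(Sig_d0 a' a'S); exact: Sig_fullfib.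
- move=> _; have [nu Hnu] := Sig_kappa_missing q_gt0 q_coprime M_gt0 M_def htile hkappa z0.
  have /cards2P [mu1 [mu2 [_ S_eq]]] : #|[set~ nu]| == 2 by rewrite cardsC1 card_ord.
  have dirs a : a \in Sig -> kappa a \in [set mu1; mu2].
    by move=> aS; rewrite -S_eq in_setC1; apply: Hnu.
  split; first by exists [set mu1; mu2]; split; rewrite // -S_eq cardsC1 card_ord.
  exists mu1, mu2; apply/subsetP => a aS.
  by case/set2P: (dirs a aS) => ka; rewrite inE -ka Sig_fullfib ?orbT.
- move=> mi mj mk nij _ _ _.
  exact: (plane_Sig_kappa_const q_gt0 M_gt0 M_def htile hkappa z0 mi mj mk nij).
Qed.
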